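(* Let $G$ be a connected finite simple graph, $\mathcal{N}G$ its normal graph algebra over a field $\mathbb{F}$ of characteristic not $2$, and let $\mathfrak{e}=[a,b]$ be an edge of $G$. Then there exists $u\in U_G$ with $u^2=\mathfrak{e}$ if and only if one of the following holds: (1) $\mathfrak{e}$ lies in an odd cycle and $G-\mathfrak{e}$ is bipartite; (2) $\mathfrak{e}$ is a bridge and at least one connected component of $G-\mathfrak{e}$ is bipartite.
   Context: For a finite simple graph $G$ with vertex set $VG$ and edge set $EG$ (edge with endpoints $x,y$ written $[x,y]$), the normal graph algebra $\mathcal{N}G$ is the $\mathbb{F}$-vector space $U_G\oplus\mathfrak{Z}_G$, where $U_G$ has basis $VG$ and $\mathfrak{Z}_G$ has basis $EG$, with commutative bilinear product determined by: for distinct vertices $x,y$, $xy=[x,y]$ if adjacent and $0$ otherwise; $x^2=\sum_{y\sim x}[x,y]$; all products involving an element of $\mathfrak{Z}_G$ are $0$. Equivalently, for $u=\sum_x\theta_x x$, $u^2=\sum_{[x,y]\in EG}(\theta_x+\theta_y)^2[x,y]$. $G-\mathfrak{e}$ denotes $G$ with the edge $\mathfrak{e}$ removed (vertices kept). *)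

From mathcomp Require Import all_boot all_order all_algebra.
Set Implicit Arguments. Unset Strict Implicit. Unset Printing Implicit Defensive.
Import GRing.Theory.
Local Open Scope ring_scope.

(* A finite simple graph: vertex set T (finType), adjacency relation e,
   assumed symmetric and irreflexive.  The edge [x,y] is identified with
   the unordered pair [set x; y]. *)
Definition simple_graph (T : finType) (e : rel T) : Prop :=
  irreflexive e /\ symmetric e.

Definition connected_graph (T : finType) (e : rel T) : Prop :=
  forall x y : T, connect e x y.

Definition remove_edge (T : finType) (e : rel T) (a b : T) : rel T :=
  [rel x y | e x y && ([set x; y] != [set a; b])].

Definition bipartite (T : finType) (e : rel T) : Prop :=
  exists c : T -> bool, forall x y, e x y -> c x != c y.

Definition component_bipartite (T : finType) (e : rel T) (v : T) : Prop :=
  exists c : T -> bool, forall x y, connect e v x -> connect e v y ->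
    e x y -> c x != c y.

Definition on_odd_cycle (T : finType) (e : rel T) (a b : T) : Prop :=
  exists s : seq T, [/\ cycle e s, uniq s, (3 <= size s)%N & odd (size s)] /\
    (a \in s) && ((next s a == b) || (next s b == a)).

Definition is_bridge (T : finType) (e : rel T) (a b : T) : Prop :=
  ~~ connect (remove_edge e a b) a b.

(* The normal graph algebra NG = U_G (+) Z_G.  An element of U_G is its
   coordinate vector on the basis VG; an element of Z_G is its coordinate
   function on edges (only values on adjacent pairs are meaningful).
   Coefficient of the edge [x,y] in the product p*q of basis vertices:
   p <> q : [p,q] if adjacent, 0 otherwise;  p^2 = sum_{z ~ p} [p,z]. *)
Definition basis_prod_coef (T : finType) (e : rel T) (F : nzRingType)
  (p q x y : T) : F :=
  if p == q then (if (p == x) || (p == y) then 1 else 0)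
  else (if e p q && ([set p; q] == [set x; y]) then 1 else 0).

Definition UG_mul (T : finType) (e : rel T) (F : nzRingType)
  (u v : T -> F) : T -> T -> F :=
  fun x y => \sum_(p : T) \sum_(q : T) u p * v q * @basis_prod_coef T e F p q x y.

Definition ZG_edge (T : finType) (F : nzRingType) (a b : T) : T -> T -> F :=
  fun x y => if [set x; y] == [set a; b] then 1 else 0.

Definition ZG_eq (T : finType) (e : rel T) (F : nzRingType)
  (z w : T -> T -> F) : Prop :=
  forall x y, e x y -> z x y = w x y.

From mathcomp Require Import all_boot all_order all_algebra.
Set Implicit Arguments. Unset Strict Implicit. Unset Printing Implicit Defensive.
Import GRing.Theory.
Local Open Scope ring_scope.

(* The coefficient of an edge [x,y] in u^2 is (u x + u y)^2, so u^2 = [a,b]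
   says exactly that u takes opposite values at the ends of every edge of
   G - [a,b], while (u a + u b)^2 = 1.  Such a u equals +-u(v) on the
   component of v in G - [a,b], so it 2-colours that component as soon as
   u(v) != 0 (here char F <> 2 is used).  If a and b stay connected in
   G - [a,b], then u b = u a, so a shortest a-b path of G - [a,b] has even
   length and closes with [a,b] to an odd cycle; if not, one of u a, u b is
   nonzero.  Conversely, signed colourings (scaled by 1/2 in the odd-cycle
   case, restricted to one side of the bridge in the other) give the
   required u. *)

Definition alternating (T : Type) (V : zmodType) (r : rel T) (u : T -> V) :=
  forall x y, r x y -> u x + u y = 0.

Definition proper_coloring (T : Type) (r : rel T) (c : T -> bool) :=
  forall x y, r x y -> c x != c y.

Definition signed (T : Type) (V : zmodType) (c : T -> bool) (w : V) (x : T) :=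
  if c x then w else - w.

Lemma set2_eqE (T : finType) (p q x y : T) :
  ([set p; q] == [set x; y]) = ((p == x) && (q == y)) || ((p == y) && (q == x)).
Proof.
apply/idP/idP; last by case/orP => /andP[/eqP-> /eqP->] //; rewrite setUC.
move/eqP=> E.
have : p \in [set x; y] by rewrite -E set21.
have : q \in [set x; y] by rewrite -E set22.
have : x \in [set p; q] by rewrite E set21.
have : y \in [set p; q] by rewrite E set22.
rewrite !inE.
by do 4 (case/orP => /eqP ?); subst; rewrite ?eqxx ?orbT.
Qed.

Lemma sum_mul_in_set2 (T : finType) (F : nzRingType) (f : T -> F) (x y : T) :
  x != y -> \sum_p f p * (p \in [set x; y])%:R = f x + f y.
Proof.
move=> neq_xy; under eq_bigr => p _ do rewrite mulr_natr mulrb.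
by rewrite -big_mkcond big_setU1 ?big_set1 // inE.
Qed.

Section EdgeCoefficients.

Variables (T : finType) (e : rel T).
Hypothesis sym_e : symmetric e.

Lemma basis_prod_coef_edge (F : nzRingType) (p q x y : T) :
  e x y -> x != y ->
  basis_prod_coef e F p q x y = ((p \in [set x; y]) && (q \in [set x; y]))%:R.
Proof.
move=> exy neq_xy; rewrite /basis_prod_coef set2_eqE !inE.
have [<-|neq_pq] := eqVneq p q; first by rewrite andbb; case: ifP.
rewrite mulrb; congr (if _ then _ else _); apply/idP/idP.
  by case/andP=> _ /orP[]/andP[/eqP-> /eqP->]; rewrite !eqxx ?orbT.
move=> /andP[/orP[]/eqP? /orP[]/eqP?]; subst;
  by move: neq_pq; rewrite ?eqxx ?orbT ?(sym_e y x) ?exy.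
Qed.

Lemma UG_mul_edge (F : comNzRingType) (u v : T -> F) (x y : T) :
  e x y -> x != y -> UG_mul e u v x y = (u x + u y) * (v x + v y).
Proof.
move=> exy neq_xy; rewrite /UG_mul.
under eq_bigr => p _ do under eq_bigr => q _ do
  rewrite basis_prod_coef_edge // -mulnb natrM mulrACA.
under eq_bigr => p _ do rewrite -mulr_sumr sum_mul_in_set2 //.
by rewrite -mulr_suml sum_mul_in_set2.
Qed.

End EdgeCoefficients.

Lemma remove_edge_sym (T : finType) (e : rel T) (a b : T) :
  symmetric e -> symmetric (remove_edge e a b).
Proof. by move=> sym_e x y; rewrite /remove_edge /= sym_e setUC. Qed.

Lemma removed_edge (T : finType) (e : rel T) (a b x y : T) :
  e x y -> ~~ remove_edge e a b x y ->
  ((x == a) && (y == b)) || ((x == b) && (y == a)).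
Proof. by rewrite /remove_edge /= -set2_eqE => -> /negbNE. Qed.

Lemma square_eq_edgeP (F : idomainType) (T : finType) (e : rel T) (a b : T)
    (u : T -> F) :
  simple_graph e -> e a b ->
  ZG_eq e (UG_mul e u u) (ZG_edge F a b) <->
  alternating (remove_edge e a b) u /\ (u a + u b) ^+ 2 = 1.
Proof.
move=> [irr_e sym_e] eab.
have neq_edge x y : e x y -> x != y.
  by move=> exy; apply: contraTneq exy => ->; rewrite irr_e.
have sqE x y : e x y -> UG_mul e u u x y = (u x + u y) ^+ 2.
  by move=> exy; rewrite UG_mul_edge ?neq_edge.
split=> [sq_u | [alt_u sq_ab] x y exy].
  split=> [x y /andP[exy /negbTE not_ab] | ].
    by apply/eqP; rewrite -sqrf_eq0 -sqE // sq_u // /ZG_edge not_ab.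
  by rewrite -sqE // sq_u // /ZG_edge eqxx.
rewrite sqE // /ZG_edge; case: ifP => [| not_ab].
  by rewrite set2_eqE => /orP[]/andP[/eqP-> /eqP->]; rewrite // addrC.
by rewrite alt_u ?expr0n // /remove_edge /= exy not_ab.
Qed.

Lemma path_parity (T : Type) (r : rel T) (c : T -> bool) (x : T) (p : seq T) :
  proper_coloring r c -> path r x p -> c (last x p) = c x (+) odd (size p).
Proof.
move=> col_c; elim: p x => [|y p IH] x /=; first by rewrite addbF.
case/andP=> rxy /IH ->; move: (col_c _ _ rxy).
by case: (c x); case: (c y); case: (odd (size p)).
Qed.

Lemma odd_cycle_not_proper (T : eqType) (r : rel T) (c : T -> bool) (s : seq T) :
  cycle r s -> odd (size s) -> ~ proper_coloring r c.
Proof.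
case: s => // x s /= cyc odd_s col_c.
move: (path_parity col_c cyc); rewrite last_rcons size_rcons /= odd_s.
by case: (c x).
Qed.

Lemma proper_coloring_remove_edge (T : finType) (e : rel T) (a b : T)
    (c : T -> bool) :
  proper_coloring (remove_edge e a b) c -> c a != c b -> proper_coloring e c.
Proof.
move=> col_c cab x y exy; case: (boolP (remove_edge e a b x y)); first exact: col_c.
by case/(removed_edge exy)/orP=> /andP[/eqP-> /eqP->]; rewrite // eq_sym.
Qed.

Lemma signed_add_eq0 (T : Type) (V : zmodType) (c : T -> bool) (w : V) (x y : T) :
  c x != c y -> signed c w x + signed c w y = 0.
Proof. by rewrite /signed; case: (c x); case: (c y); rewrite ?subrr ?addNr. Qed.

Lemma alternating_signed (T : Type) (V : zmodType) (r : rel T) (c : T -> bool)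
    (w : V) :
  proper_coloring r c -> alternating r (signed c w).
Proof. by move=> col_c x y /col_c; apply: signed_add_eq0. Qed.

Lemma alternating_restrict (T : finType) (V : zmodType) (r : rel T) (v : T)
    (u : T -> V) :
  connect_sym r ->
  (forall x y, connect r v x -> r x y -> u x + u y = 0) ->
  alternating r (fun x => if connect r v x then u x else 0).
Proof.
move=> sym_r alt_u x y rxy.
have vxy : connect r v x = connect r v y.
  by apply: same_connect_r => //; apply: connect1.
by rewrite -vxy; case: ifP => [/alt_u->|] //; rewrite addr0.
Qed.

Lemma oppr_eq_self (F : idomainType) (x : F) :
  (2%:R : F) != 0 -> (- x == x) = (x == 0).
Proof.
move=> two_neq0; rewrite eq_sym -subr_eq0 opprK -mulr2n -mulr_natl mulf_eq0.
by rewrite (negbTE two_neq0).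
Qed.

Lemma alternating_eq_opp (T : Type) (V : zmodType) (r : rel T) (u : T -> V)
    (x y : T) :
  alternating r u -> r x y -> u y = - u x.
Proof. by move=> alt_u rxy; apply/eqP; rewrite -addr_eq0 addrC alt_u. Qed.

Lemma alternating_connect (T : finType) (V : zmodType) (r : rel T)
    (u : T -> V) (v x : T) :
  alternating r u -> connect r v x -> (u x == u v) || (u x == - u v).
Proof.
move=> alt_u /connectP[p + ->]; elim: p v => [|y p IH] v /=; first by rewrite eqxx.
by case/andP=> /(alternating_eq_opp alt_u) uy /IH; rewrite uy opprK orbC.
Qed.

Lemma alternating_coloring (F : idomainType) (T : finType) (r : rel T)
    (u : T -> F) (v x y : T) :
  (2%:R : F) != 0 -> alternating r u -> u v != 0 ->
  connect r v x -> r x y -> (u x == u v) != (u y == u v).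
Proof.
move=> two_neq0 alt_u uv_neq0 vx rxy.
rewrite (alternating_eq_opp alt_u rxy).
have opp_uv : (- u v == u v) = false by rewrite oppr_eq_self // (negbTE uv_neq0).
by case/orP: (alternating_connect alt_u vx) => /eqP->; rewrite ?opprK eqxx opp_uv.
Qed.

Lemma connect_remove_edge (T : finType) (e : rel T) (a b v : T) :
  symmetric e -> connected_graph e ->
  connect (remove_edge e a b) v a || connect (remove_edge e a b) v b.
Proof.
move=> sym_e conn_e; set e' := remove_edge e a b.
have sym_e' : connect_sym e' by apply/sym_connect_sym/remove_edge_sym.
pose A := [pred x | connect e' x a || connect e' x b].
have closedA : closed e A.
  move=> x y exy; case: (boolP (e' x y)) => [e'xy | /(removed_edge exy)].
    by rewrite !inE !(same_connect1 sym_e' e'xy).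
  by case/orP=> /andP[/eqP-> /eqP->]; rewrite !inE !connect0 ?orbT.
have := closed_connect closedA (conn_e a v).
by rewrite !inE connect0 => <-.
Qed.

Lemma on_odd_cycle_of_coloring (T : finType) (e r : rel T) (c : T -> bool)
    (a b : T) :
  subrel r e -> e b a -> a != b -> proper_coloring r c -> c a = c b ->
  connect r a b -> on_odd_cycle e a b.
Proof.
move=> sub_re eba neq_ab col_c cab /connectP[p0 /shortenP[p r_p uniq_p _] b_last].
subst b; have even_p : ~~ odd (size p).
  by move: (path_parity col_c r_p); rewrite -cab; case: (c a); case: (odd _).
have size_p : (2 <= size p)%N.
  case: p {r_p uniq_p col_c cab eba} even_p neq_ab => [|y [|z q]] //=.
  by rewrite eqxx.
exists (a :: p); split.
  by split=> //=; rewrite rcons_path (sub_path sub_re r_p).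
rewrite mem_head (next_nth (a :: p) (last a p)) mem_last index_last //=.
by rewrite nth_default // eqxx orbT.
Qed.

Section SquareRootOfEdge.

Variables (F : idomainType) (T : finType) (e : rel T) (a b : T) (u : T -> F).
Hypotheses (two_neq0 : (2%:R : F) != 0)
  (alt_u : alternating (remove_edge e a b) u) (u_ab : u a + u b != 0).

Lemma component_bipartite_of_root :
  exists v, component_bipartite (remove_edge e a b) v.
Proof.
have [v uv_neq0] : exists v, u v != 0.
  have [ua0|] := eqVneq (u a) 0; last by exists a.
  by exists b; move: u_ab; rewrite ua0 add0r.
by exists v, (fun x => u x == u v) => x y vx _; apply: alternating_coloring.
Qed.

Lemma odd_cycle_of_root :
  symmetric e -> connected_graph e -> e a b -> a != b ->
  connect (remove_edge e a b) a b ->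
  on_odd_cycle e a b /\ bipartite (remove_edge e a b).
Proof.
move=> sym_e conn_e eab neq_ab ab; set e' := remove_edge e a b.
have sym_e' : connect_sym e' by apply/sym_connect_sym/remove_edge_sym.
have ub : u b = u a.
  case/orP: (alternating_connect alt_u ab) => /eqP // ub.
  by move: u_ab; rewrite ub subrr eqxx.
have ua_neq0 : u a != 0 by apply: contraNneq u_ab => ua0; rewrite ub ua0 addr0.
have from_a x : connect e' a x.
  rewrite sym_e'; case/orP: (connect_remove_edge a b x sym_e conn_e) => // xb.
  by apply: connect_trans xb _; rewrite sym_e'.
have col : proper_coloring e' (fun x => u x == u a).
  by move=> x y; apply: alternating_coloring.
split; last by exists (fun x => u x == u a).
apply: (on_odd_cycle_of_coloring _ _ neq_ab col) => //; last by rewrite ub.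
- by move=> x y /andP[].
- by rewrite sym_e.
Qed.

End SquareRootOfEdge.

Lemma root_of_odd_cycle (F : fieldType) (T : finType) (e : rel T) (a b : T) :
  (2%:R : F) != 0 -> on_odd_cycle e a b -> bipartite (remove_edge e a b) ->
  exists u : T -> F, alternating (remove_edge e a b) u /\ (u a + u b) ^+ 2 = 1.
Proof.
move=> two_neq0 [s [[cyc _ _ odd_s] _]] [c col_c].
have cab : c a = c b.
  apply/eqP; apply: contraT => /(proper_coloring_remove_edge col_c).
  by move/(odd_cycle_not_proper cyc odd_s).
exists (signed (fun x => c x == c a) 2%:R^-1); split.
  apply: alternating_signed => x y /col_c.
  by case: (c x); case: (c y); case: (c a).
by rewrite /signed -cab eqxx -[_ + _]mulr2n -[_ *+ 2]mulr_natr mulVf // expr1n.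
Qed.

Lemma root_of_bridge (R : nzRingType) (T : finType) (e : rel T) (a b v : T) :
  symmetric e -> connected_graph e -> is_bridge e a b ->
  component_bipartite (remove_edge e a b) v ->
  exists u : T -> R, alternating (remove_edge e a b) u /\ (u a + u b) ^+ 2 = 1.
Proof.
move=> sym_e conn_e bridge [c col_c]; set e' := remove_edge e a b.
have sym_e' : connect_sym e' by apply/sym_connect_sym/remove_edge_sym.
exists (fun x => if connect e' v x then signed c 1 x else 0); split.
  apply: alternating_restrict => // x y vx e'xy; apply/signed_add_eq0/col_c => //.
  exact: connect_trans vx (connect1 e'xy).
have not_both : ~~ (connect e' v a && connect e' v b).
  apply: contra bridge => /andP[va vb]; apply: connect_trans vb.
  by rewrite sym_e'.
case/orP: (connect_remove_edge a b v sym_e conn_e) => side; rewrite side;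
  move: not_both; rewrite side /= ?andbT => /negbTE ->;
  by rewrite /signed; case: (c _); rewrite ?addr0 ?add0r ?sqrrN expr1n.
Qed.

Theorem proposition6p1 (F : fieldType) (T : finType) (e : rel T) (a b : T) :
  (2%:R : F) != 0 ->
  simple_graph e -> connected_graph e -> e a b ->
  (exists u : T -> F, ZG_eq e (UG_mul e u u) (ZG_edge F a b)) <->
  ((on_odd_cycle e a b /\ bipartite (remove_edge e a b)) \/
   (is_bridge e a b /\
    exists v : T, component_bipartite (remove_edge e a b) v)).
Proof.
move=> two_neq0 simple_e conn_e eab; have [irr_e sym_e] := simple_e.
have neq_ab : a != b by apply: contraTneq eab => ->; rewrite irr_e.
split=> [[u /(square_eq_edgeP _ simple_e eab) [alt_u sq_ab]] | cases].
  have u_ab : u a + u b != 0.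
    by apply/eqP => ab0; move: sq_ab; rewrite ab0 expr0n => /esym/eqP; rewrite oner_eq0.
  case: (boolP (connect (remove_edge e a b) a b)) => [ab | bridge].
    by left; apply: (odd_cycle_of_root two_neq0 alt_u u_ab).
  by right; split; last exact: (component_bipartite_of_root two_neq0 alt_u u_ab).
have [u root_u] : exists u : T -> F,
    alternating (remove_edge e a b) u /\ (u a + u b) ^+ 2 = 1.
  case: cases => [[cyc bip] | [bridge [v comp]]].
    exact: root_of_odd_cycle.
  exact: root_of_bridge comp.
by exists u; apply/square_eq_edgeP.
Qed.
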